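(* The functions $F(n)=\sum_{j=1}^n\frac{(-1)^{j-1}}{j}$, $L(n)=\sum_{j=1}^n\frac{(-1)^{j-1}}{2j-1}$ and $S(n)=\sum_{j=1}^n\frac{1}{j!}$ of the positive integer variable $n$ are transcendental functions in $n$ over $\overline{\mathbb{Q}}$.
   Context: $\overline{\mathbb{Q}}\subseteq\mathbb{C}$ denotes the field of algebraic numbers. A function $f(n)$ of the positive integer variable $n$ is an algebraic function over a subfield $K\subseteq\mathbb{C}$ if there exist polynomials $q_0,\dots,q_k\in K[n]$ with $q_k\neq 0$ such that $q_k(n)f(n)^k+\cdots+q_1(n)f(n)+q_0(n)=0$ for all positive integers $n$; otherwise $f$ is a transcendental function over $K$. *)

(* Qbar = algC (the field of algebraic numbers). *)
From HB Require Import structures.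
From mathcomp Require Import all_boot all_order all_algebra all_field.
Set Implicit Arguments. Unset Strict Implicit. Unset Printing Implicit Defensive.
Import Order.TTheory GRing.Theory Num.Theory.
Local Open Scope ring_scope.

Definition algebraic_fun_Qbar (f : nat -> algC) : Prop :=
  exists (k : nat) (q : nat -> {poly algC}),
    q k != 0 /\
    forall n : nat, (0 < n)%N ->
      \sum_(i < k.+1) (q i).[n%:R] * f n ^+ i = 0.

Definition transcendental_fun_Qbar (f : nat -> algC) : Prop :=
  ~ algebraic_fun_Qbar f.

Definition Ffun (n : nat) : algC :=
  \sum_(1 <= j < n.+1) (-1) ^+ (j.-1) / j%:R.

Definition Lfun (n : nat) : algC :=
  \sum_(1 <= j < n.+1) (-1) ^+ (j.-1) / (j.*2.-1)%:R.

Definition Sfun (n : nat) : algC :=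
  \sum_(1 <= j < n.+1) ((j`!)%:R)^-1.

(* Since F, L and S take rational values, a polynomial relation over Qbar
   descends to one with integer polynomial coefficients q_0, ..., q_k: a
   Q-linear coordinate form on a number field containing the coefficients maps
   it to a relation over Q, and the denominators are then cleared.
   Fix t > 0.  For every large prime p the value f(p + t) has p-adic valuation
   exactly -1: exactly one term of F and of L has p in its denominator, and the
   tail of S from 1/p! on equals W/(p C) with W = sum_(i <= t) t!/i! mod p.
   Multiplying the relation at n = p + t by the k-th power of the denominator
   shows that p divides q_k(p + t), which is q_k(t) mod p; for p > |q_k(t)|
   this forces q_k(t) = 0.  So q_k vanishes on all positive integers, hence
   q_k = 0, a contradiction. *)

From HB Require Import structures.
From mathcomp Require Import all_boot all_order all_algebra all_field.
From mathcomp Require Import ring zify.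
Set Implicit Arguments. Unset Strict Implicit. Unset Printing Implicit Defensive.
Import Order.TTheory GRing.Theory Num.Theory.
Local Open Scope ring_scope.

Local Notation pZtoQ := (map_poly (intr : int -> rat)).

Section PadicValuation.

Variable p : nat.
Hypothesis p_pr : prime p.

Definition p_integral (x : rat) :=
  exists (A : int) (B : nat), ~~ (p %| B)%N /\ x = A%:~R / B%:R.

Definition simple_pole (x : rat) := exists (A : int) (B : nat),
  [/\ ~~ (p %| `|A|)%N, ~~ (p %| B)%N & x = A%:~R / (p * B)%:R].

Let natr_neq0 (B : nat) : ~~ (p %| B)%N -> (B%:R : rat) != 0.
Proof.
by apply: contraNneq => /eqP; rewrite pnatr_eq0 => /eqP ->; rewrite dvdn0.
Qed.

Let p_ndvd1 : ~~ (p %| 1)%N.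
Proof. by rewrite dvdn1 neq_ltn prime_gt1 ?orbT. Qed.

Lemma p_integral_sign_div e (B : nat) :
  ~~ (p %| B)%N -> p_integral ((-1) ^+ e / B%:R).
Proof. by move=> nB; exists ((-1) ^+ e), B; rewrite rmorphXn rmorphN1. Qed.

Lemma p_integral0 : p_integral 0.
Proof. by exists 0, 1%N; rewrite mul0r. Qed.

Lemma p_integralD x y : p_integral x -> p_integral y -> p_integral (x + y).
Proof.
move=> [A [B [nB ->]]] [C [E [nE ->]]].
exists (A * E%:Z + C * B%:Z), (B * E)%N; split.
  by rewrite Euclid_dvdM // negb_or nB nE.
have := natr_neq0 nB; have := natr_neq0 nE.
by rewrite rmorphD !rmorphM /= -!pmulrn => ? ?; field; apply/andP.
Qed.

Lemma simple_poleD x y : simple_pole x -> p_integral y -> simple_pole (x + y).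
Proof.
move=> [A [B [nA nB ->]]] [C [E [nE ->]]].
exists (A * E%:Z + p%:Z * (B%:Z * C)), (B * E)%N; split.
- rewrite -[X in (X %| _)%N]/(`|p%:Z|)%N -dvdzE.
  rewrite (rpredDr _ (dvdz_mulr _ (dvdzz p%:Z))).
  by rewrite dvdzE abszM Euclid_dvdM // negb_or nA nE.
- by rewrite Euclid_dvdM // negb_or nB nE.
have := natr_neq0 nB; have := natr_neq0 nE; have : (p%:R : rat) != 0.
  by rewrite pnatr_eq0 -lt0n prime_gt0.
by rewrite rmorphD !rmorphM /= -!pmulrn => ? ? ?; field; apply/and3P.
Qed.

Lemma p_integral_sum (I : eqType) (r : seq I) (P : pred I) (F : I -> rat) :
  (forall i, i \in r -> P i -> p_integral (F i)) ->
  p_integral (\sum_(i <- r | P i) F i).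
Proof.
move=> intF; rewrite big_seq_cond; apply: (big_ind p_integral p_integral0).
  exact: p_integralD.
by move=> i /andP[/intF].
Qed.

Lemma simple_pole_sum_nat m n j0 (F : nat -> rat) : (m <= j0 < n)%N ->
  simple_pole (F j0) ->
  (forall j, (m <= j < n)%N -> j != j0 -> p_integral (F j)) ->
  simple_pole (\sum_(m <= j < n) F j).
Proof.
move=> j0_in poleF intF.
rewrite (bigD1_seq j0) ?mem_index_iota ?iota_uniq //=.
apply: simple_poleD => //.
by apply: p_integral_sum => j; rewrite mem_index_iota => /intF.
Qed.

Lemma simple_pole_sign_div e : simple_pole ((-1) ^+ e / p%:R).
Proof.
exists ((-1) ^+ e), 1%N; split => //; last by rewrite muln1 rmorphXn rmorphN1.
by rewrite abszX /= exp1n.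
Qed.

End PadicValuation.

Definition poly_relation (R : nzRingType) k (q : nat -> {poly R})
    (f : nat -> R) :=
  q k != 0 /\ forall n, (0 < n)%N -> \sum_(i < k.+1) (q i).[n%:R] * f n ^+ i = 0.

Lemma horner_linear (F : fieldType) (L : algType F) (phi : {scalar L})
    (P : {poly L}) (x : F) :
  phi P.[x%:A] = (map_poly phi P).[x].
Proof.
rewrite horner_coef (horner_coef_wide _ (size_poly _ _)) linear_sum.
apply: eq_bigr => l _; rewrite coef_map -[x%:A](in_algE L) -rmorphXn /=.
by rewrite mulr_algr linearZ mulrC.
Qed.

Lemma poly_relation_descent (F : fieldType) (L : fieldExtType F) k
    (q : nat -> {poly L}) (r : nat -> F) :
  poly_relation k q (fun n => (r n)%:A) -> exists q', poly_relation k q' r.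
Proof.
move=> [qk_neq0 rel_q].
pose X := vbasis (fullv : {vspace L}); pose c := lead_coef (q k).
have [j cj_neq0] : exists j, coord X j c != 0.
  apply/existsP; apply: contraR qk_neq0; rewrite negb_exists => /forallP c0.
  rewrite -lead_coef_eq0 -/c (coord_vbasis (memvf c)); apply/eqP/big1 => i _.
  by move: (c0 i); rewrite negbK => /eqP ->; rewrite scale0r.
exists (fun i => map_poly (coord X j) (q i)); split.
  by apply: contraNneq cj_neq0 => q'k0; rewrite -coef_map q'k0 coef0.
move=> n n_gt0; rewrite -[RHS](linear0 (coord X j)) -(rel_q n n_gt0).
rewrite linear_sum; apply: eq_bigr => i _.
rewrite -[(r n)%:A](in_algE L) -rmorphXn /= mulr_algr linearZ /= mulrC.
by rewrite -horner_linear -(in_algE L) rmorph_nat.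
Qed.

Lemma poly_relation_ratr k (q : nat -> {poly algC}) (r : nat -> rat) :
  poly_relation k q (fun n => ratr (r n)) -> exists q', poly_relation k q' r.
Proof.
move=> [qk_neq0 rel_q].
pose s := flatten [seq polyseq (q i) | i <- iota 0 k.+1].
have [Qs [QsC [s1 Ds1 _]]] := num_field_exists s.
pose lift c := nth 0 s1 (index c s).
have liftK c : c \in s -> QsC (lift c) = c.
  move=> s_c; have := congr1 (nth 0 ^~ (index c s)) Ds1.
  by rewrite /= (nth_map 0) ?nth_index // -(size_map QsC) Ds1 index_mem.
pose q1 i := \poly_(l < size (q i)) lift (q i)`_l.
have q1K i : (i <= k)%N -> map_poly QsC (q1 i) = q i.
  move=> le_ik; apply/polyP => l; rewrite coef_map coef_poly /=.
  case: ltnP => [lt_l | /(nth_default 0) ->]; last exact: rmorph0.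
  apply/liftK/flatten_mapP; exists i; first by rewrite mem_iota.
  exact: mem_nth.
apply: (@poly_relation_descent _ Qs _ q1); split.
  by apply: contra_neq qk_neq0; rewrite -q1K // => ->; rewrite rmorph0.
move=> n n_gt0; apply: (fmorph_inj QsC).
rewrite rmorph0 -(rel_q n n_gt0) rmorph_sum; apply: eq_bigr => i _.
rewrite rmorphM rmorphXn -horner_map q1K; last by rewrite -ltnS.
by rewrite rmorph_nat alg_num_field fmorph_rat.
Qed.

Lemma rat_polys_scale (q : nat -> {poly rat}) m :
  exists2 d : int, d != 0 & exists Q : nat -> {poly int},
    forall i, (i < m)%N -> d%:~R *: q i = pZtoQ (Q i).
Proof.
elim: m => [|m [d d_neq0 [Q dqE]]]; first by exists 1 => //; exists (fun=> 0).
have [Qm [a a_neq0 qmE]] := rat_poly_scale (q m).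
exists (d * a); first by rewrite mulf_neq0.
exists (fun i => if (i < m)%N then a *: Q i else d *: Qm) => i.
rewrite ltnS leq_eqVlt rmorphM /=; case: ltngtP => [lt_im _ | // | -> _].
  by rewrite mulrC -scalerA dqE // map_polyZ.
by rewrite qmE scalerA mulfK ?intr_eq0 // map_polyZ.
Qed.

Lemma poly_relation_intr k (q : nat -> {poly rat}) (r : nat -> rat) :
  poly_relation k q r -> exists Q, poly_relation k (fun i => pZtoQ (Q i)) r.
Proof.
move=> [qk_neq0 rel_q]; have [d d_neq0 [Q dqE]] := rat_polys_scale q k.+1.
exists Q; split; first by rewrite -dqE // scaler_eq0 intr_eq0 negb_or d_neq0.
move=> n n_gt0; rewrite -[RHS](mulr0 d%:~R) -[X in _ = _ * X](rel_q n n_gt0).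
by rewrite mulr_sumr; apply: eq_bigr => i _; rewrite -dqE // hornerZ mulrA.
Qed.

Lemma dvdz_hornerB (P : {poly int}) (x y : int) : (x - y %| P.[x] - P.[y])%Z.
Proof.
elim/poly_ind: P => [|P c IH]; first by rewrite !horner0 subrr dvdz0.
rewrite !hornerMXaddC.
have -> : P.[x] * x + c - (P.[y] * y + c) =
          (P.[x] - P.[y]) * x + P.[y] * (x - y) by ring.
by apply: rpredD; [apply: dvdz_mulr | apply: dvdz_mull].
Qed.

Lemma simple_pole_root_dvd p k (c : nat -> int) (x : rat) :
  prime p -> simple_pole p x -> \sum_(i < k.+1) (c i)%:~R * x ^+ i = 0 ->
  (p %| c k)%Z.
Proof.
move=> p_pr [A [B [nA nB ->]]] root_x; set D : int := (p * B)%N.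
have pB_neq0 : (p%:R * B%:R : rat) != 0.
  rewrite mulf_neq0 // pnatr_eq0; first by rewrite -lt0n prime_gt0.
  by apply: contraNneq nB => ->.
have cleared : \sum_(i < k.+1) c i * A ^+ i * D ^+ (k - i) = 0.
  apply: (@intr_inj rat); rewrite rmorph0 -[RHS](mulr0 ((D%:~R : rat) ^+ k)).
  rewrite -[X in _ = _ * X]root_x mulr_sumr rmorph_sum.
  apply: eq_bigr => i _; have le_ik : (i <= k)%N by rewrite -ltnS.
  rewrite [_ ^+ k](_ : _ = (D%:~R : rat) ^+ i * D%:~R ^+ (k - i)); last first.
    by rewrite -exprD subnKC.
  rewrite !rmorphM !rmorphXn /= expr_div_n /D -pmulrn natrM.
  by field; rewrite expf_neq0.
rewrite big_ord_recr /= subnn expr0 mulr1 in cleared.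
have dvd_lead : (p %| c k * A ^+ k)%Z.
  move/eqP: cleared; rewrite addrC addr_eq0 => /eqP ->.
  rewrite rpredN; apply: rpred_sum => i _; apply: dvdz_mull.
  by rewrite /= -(subnSK (ltn_ord i)) exprS dvdz_mulr // /D PoszM dvdz_mulr.
move: dvd_lead; rewrite !dvdzE abszM abszX /= Euclid_dvdM // Euclid_dvdX //.
by rewrite (negbTE nA) andFb orbF.
Qed.

Definition eventually_simple_poles (r : nat -> rat) := forall t, (0 < t)%N ->
  exists N, forall p, prime p -> (N < p)%N -> simple_pole p (r (p + t)%N).

Lemma no_poly_relation_of_simple_poles k (Q : nat -> {poly int}) r :
  eventually_simple_poles r -> ~ poly_relation k (fun i => pZtoQ (Q i)) r.
Proof.
move=> poles [Qk_neq0 rel_Q].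
have root_Qk t : (0 < t)%N -> (Q k).[t%:Z] = 0.
  move=> t_gt0; have [N poleN] := poles t t_gt0; set v := (Q k).[t%:Z].
  have [p] := prime_above (maxn N `|v|).
  rewrite gtn_max => /andP[ltNp ltvp] p_pr.
  have dvd_pt : (p %| (Q k).[(p + t)%N%:Z])%Z.
    apply: (simple_pole_root_dvd (c := fun i => (Q i).[(p + t)%N%:Z]) p_pr
      (poleN p p_pr ltNp)).
    rewrite -[RHS](rel_Q (p + t)%N (ltn_addl p t_gt0)); apply: eq_bigr => i _.
    by rewrite -horner_map /= pmulrn.
  have := dvdz_hornerB (Q k) (p + t)%N t.
  rewrite PoszD addrK (rpredBl _ dvd_pt).
  by rewrite dvdzE /=; apply: contraTeq => v_neq0; rewrite gtnNdvd ?absz_gt0.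
move: Qk_neq0; rewrite -size_poly_eq0 size_rat_int_poly size_poly_eq0 => /eqP[].
apply: (@roots_geq_poly_eq0 _ _ [seq t.+1%:Z | t <- iota 0 (size (Q k))]).
- by apply/allP => _ /mapP[t _ ->]; apply/eqP/root_Qk.
- by rewrite map_inj_uniq ?iota_uniq // => t u /eqP; rewrite eqz_nat => /eqP[].
by rewrite size_map size_iota.
Qed.

Lemma transcendental_of_simple_poles (f : nat -> algC) (r : nat -> rat) :
  (forall n, f n = ratr (r n)) -> eventually_simple_poles r ->
  transcendental_fun_Qbar f.
Proof.
move=> fE poles [k [q [qk_neq0 rel_q]]].
have [|q' /poly_relation_intr[Q]] := @poly_relation_ratr k q r.
  split=> // n n_gt0; rewrite -[RHS](rel_q n n_gt0).
  by apply: eq_bigr => i _; rewrite fE.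
exact: no_poly_relation_of_simple_poles.
Qed.

Definition Frat (n : nat) : rat := \sum_(1 <= j < n.+1) (-1) ^+ j.-1 / j%:R.
Definition Lrat (n : nat) : rat :=
  \sum_(1 <= j < n.+1) (-1) ^+ j.-1 / (j.*2.-1)%:R.
Definition Srat (n : nat) : rat := \sum_(1 <= j < n.+1) (j`!)%:R^-1.

Lemma Frat_simple_pole p t :
  prime p -> (t < p)%N -> simple_pole p (Frat (p + t)%N).
Proof.
move=> p_pr lt_tp; have p_gt0 := prime_gt0 p_pr.
apply: (@simple_pole_sum_nat _ p_pr _ _ p); first by apply/andP; split; lia.
  exact: simple_pole_sign_div.
move=> j /andP[j_gt0 le_jpt] j_neq_p; apply: p_integral_sign_div.
apply/negP => /dvdnP[[|[|c]] j_eq]; move/eqP: j_neq_p; nia.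
Qed.

Lemma Lrat_simple_pole p t : prime p -> (2 < p)%N -> (t.*2 < p)%N ->
  simple_pole p (Lrat (p + t)%N).
Proof.
move=> p_pr lt2p lt_tp; have p_gt0 := prime_gt0 p_pr.
have p_odd : odd p by case: (even_prime p_pr) lt2p => [-> //|].
have pE : (p./2.+1).*2.-1 = p.
  by rewrite doubleS /= -[RHS]odd_double_half p_odd add1n.
apply: (@simple_pole_sum_nat _ p_pr _ _ p./2.+1).
- by apply/andP; split => //; rewrite ltnS -leq_double -ltnS; lia.
- by rewrite pE; apply: simple_pole_sign_div.
move=> j /andP[j_gt0 le_jpt] j_neq; apply: p_integral_sign_div.
apply/negP => /dvdnP[c]; rewrite -!muln2 in lt_tp pE *.
case: c => [|[|[|c]]] c_eq; move/eqP: j_neq; nia.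
Qed.

(* The number of arrangements of a t-set, [\sum_(i <= t) t`! %/ i`!]. *)
Fixpoint arrangements (t : nat) : nat :=
  if t is t'.+1 then (arrangements t' * t + 1)%N else 1%N.

Lemma arrangements_gt0 t : (0 < arrangements t)%N.
Proof. by case: t => //= t; rewrite addn1. Qed.

Lemma prime_ndvd_fact p j : prime p -> (j < p)%N -> ~~ (p %| j`!)%N.
Proof.
move=> p_pr; elim: j => [|j IHj] lt_jp.
  by rewrite dvdn1 neq_ltn prime_gt1 ?orbT.
by rewrite factS Euclid_dvdM // negb_or IHj 1?ltnW // gtnNdvd.
Qed.

Lemma sum_invfact_tail p t : prime p -> (t < p)%N -> exists W C : nat,
  [/\ W = arrangements t %[mod p], ~~ (p %| C)%N, (p + t)`!%N = (p * C)%N &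
      \sum_(p <= j < (p + t)%N.+1) ((j`!)%:R : rat)^-1 = W%:R / (p * C)%:R].
Proof.
move=> p_pr; have p_gt0 := prime_gt0 p_pr.
elim: t => [|t IHt] lt_tp.
  have factE : p`! = (p * (p.-1)`!)%N by rewrite -{1}(prednK p_gt0) factS prednK.
  exists 1%N, (p.-1)`!; rewrite addn0 big_nat1 mul1r factE.
  by split => //; apply: prime_ndvd_fact; rewrite // ltn_predL.
have [W [C [WE nC factE sumE]]] := IHt (ltnW lt_tp).
exists (W * (p + t.+1) + 1)%N, (C * (p + t.+1))%N; split.
- by rewrite /= -modnDml mulnDr modnMDl -modnMml WE modnMml modnDml.
- by rewrite Euclid_dvdM // negb_or nC (dvdn_addr _ (dvdnn p)) gtnNdvd.
- by rewrite addnS factS factE; ring.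
rewrite addnS big_nat_recr /=; last exact/leqW/leq_addr.
rewrite (_ : \sum_(p <= j < (p + t).+1) _ = W%:R / (p * C)%:R) // factS factE.
have p_neq0 : (p%:R : rat) != 0 by rewrite pnatr_eq0 -lt0n.
have C_neq0 : (C%:R : rat) != 0 by rewrite pnatr_eq0; apply: contraNneq nC => ->.
have pt1_neq0 : (1 + (p%:R + t%:R) : rat) != 0 by rewrite -natrD nat1r pnatr_eq0.
by rewrite !natrM natrD; field; rewrite pt1_neq0 C_neq0 p_neq0.
Qed.

Lemma Srat_simple_pole p t : prime p -> (t < p)%N -> (arrangements t < p)%N ->
  simple_pole p (Srat (p + t)%N).
Proof.
move=> p_pr lt_tp lt_Ep; have p_gt0 := prime_gt0 p_pr.
rewrite /Srat (@big_cat_nat _ _ _ p) //= 1?addrC; last exact/leqW/leq_addr.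
have [W [C [WE nC _ ->]]] := sum_invfact_tail p_pr lt_tp.
apply: (simple_poleD p_pr).
  exists W, C; split => //.
  by rewrite /dvdn /= WE modn_small // -lt0n arrangements_gt0.
apply: (p_integral_sum p_pr) => j; rewrite mem_index_iota => /andP[_ lt_jp] _.
have := p_integral_sign_div 0 (prime_ndvd_fact p_pr lt_jp).
by rewrite expr0 mul1r.
Qed.

Lemma Ffun_rat n : Ffun n = ratr (Frat n).
Proof.
rewrite rmorph_sum; apply: eq_bigr => j _.
by rewrite fmorph_div rmorphXn rmorphN1 /= ratr_nat.
Qed.

Lemma Lfun_rat n : Lfun n = ratr (Lrat n).
Proof.
rewrite rmorph_sum; apply: eq_bigr => j _.
by rewrite fmorph_div rmorphXn rmorphN1 /= ratr_nat.
Qed.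

Lemma Sfun_rat n : Sfun n = ratr (Srat n).
Proof.
by rewrite rmorph_sum; apply: eq_bigr => j _; rewrite fmorphV /= ratr_nat.
Qed.

Theorem mainTheorem11 :
  transcendental_fun_Qbar Ffun /\
  transcendental_fun_Qbar Lfun /\
  transcendental_fun_Qbar Sfun.
Proof.
split; [|split].
- apply: (transcendental_of_simple_poles Ffun_rat) => t _.
  by exists t => p p_pr; apply: Frat_simple_pole.
- apply: (transcendental_of_simple_poles Lfun_rat) => t _.
  exists (maxn 2 t.*2) => p p_pr; rewrite gtn_max => /andP[].
  exact: Lrat_simple_pole.
- apply: (transcendental_of_simple_poles Sfun_rat) => t _.
  exists (maxn t (arrangements t)) => p p_pr; rewrite gtn_max => /andP[].
  exact: Srat_simple_pole.
Qed.
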